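(* Let $n_1,n_2\in\mathbb{Z}$ and let $\overline{\nabla}_{(n_1)},\overline{\nabla}_{(n_2)}$ be the standard holomorphic structures on $\mathcal{L}_{n_1},\mathcal{L}_{n_2}$. Then the tensor product connection $$\overline{\nabla}_{(n_1)}\otimes 1+(\Phi_{(n_1)}\otimes 1)(1\otimes\overline{\nabla}_{(n_2)}):\ \mathcal{L}_{n_1}\otimes_{\mathcal{B}}\mathcal{L}_{n_2}\to\Omega^{(0,1)}(\mathbb{CP}^1_q)\otimes_{\mathcal{B}}\mathcal{L}_{n_1}\otimes_{\mathcal{B}}\mathcal{L}_{n_2}$$ coincides with the standard holomorphic structure $\overline{\nabla}_{(n_1+n_2)}$ on $\mathcal{L}_{n_1+n_2}$ when $\mathcal{L}_{n_1}\otimes_{\mathcal{B}}\mathcal{L}_{n_2}$ is identified with $\mathcal{L}_{n_1+n_2}$ via multiplication.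
   Context: Fix $0<q<1$. Let $\mathcal{A}(SU_q(2))$ be the unital complex $*$-algebra generated by $a,c$ subject to $ac=qca$, $ac^*=qc^*a$, $cc^*=c^*c$, $a^*a+c^*c=aa^*+q^2cc^*=1$. Let $U_q(su(2))$ be the Hopf algebra generated by $K,K^{-1},E,F$ with $KK^{-1}=K^{-1}K=1$, $KE=qEK$, $KF=q^{-1}FK$, $EF-FE=(K^2-K^{-2})/(q-q^{-1})$, coproduct $\Delta K=K\otimes K$, $\Delta E=E\otimes K+K^{-1}\otimes E$, $\Delta F=F\otimes K+K^{-1}\otimes F$, counit $\epsilon(K)=1$, $\epsilon(E)=\epsilon(F)=0$. It acts on $\mathcal{A}(SU_q(2))$ from the left making it a left module algebra, with $K\triangleright a=q^{-1/2}a$, $K\triangleright c=q^{-1/2}c$, $K\triangleright a^*=q^{1/2}a^*$, $K\triangleright c^*=q^{1/2}c^*$, $E\triangleright a=-qc^*$, $E\triangleright c=a^*$, $E\triangleright a^*=E\triangleright c^*=0$, $F\triangleright a=F\triangleright c=0$, $F\triangleright a^*=c$, $F\triangleright c^*=-q^{-1}a$. Put $X_-=q^{-1/2}FK$. For $n\in\mathbb{Z}$ let $\mathcal{L}_n=\{x:K\triangleright x=q^{n/2}x\}$ and $\mathcal{B}=\mathcal{A}(\mathbb{CP}^1_q):=\mathcal{L}_0$; each $\mathcal{L}_n$ is a $\mathcal{B}$-bimodule, and multiplication induces $\mathcal{B}$-bimodule isomorphisms $\mathcal{L}_n\otimes_{\mathcal{B}}\mathcal{L}_m\simeq\mathcal{L}_{n+m}$.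 Let $\Omega^1(SU_q(2))$ be the $\mathcal{A}(SU_q(2))$-bimodule which is free as a left module with basis $\omega_+,\omega_-,\omega_z$, with right multiplication determined by $\omega_\pm x=q^kx\omega_\pm$, $\omega_zx=q^{2k}x\omega_z$ for $x\in\mathcal{L}_k$. Put $\Omega^{(0,1)}(\mathbb{CP}^1_q):=\mathcal{L}_{-2}\omega_-$. For each $n$ the multiplication maps $\mu_1^{(n)}:\mathcal{L}_n\otimes_{\mathcal{B}}\Omega^{(0,1)}(\mathbb{CP}^1_q)\to\mathcal{L}_{n-2}\omega_-$ and $\mu_2^{(n)}:\Omega^{(0,1)}(\mathbb{CP}^1_q)\otimes_{\mathcal{B}}\mathcal{L}_n\to\mathcal{L}_{n-2}\omega_-$ are $\mathcal{B}$-bimodule isomorphisms; set $\Phi_{(n)}:=(\mu_2^{(n)})^{-1}\circ\mu_1^{(n)}$. The standard holomorphic structure on $\mathcal{L}_n$ is $\overline{\nabla}_{(n)}:\mathcal{L}_n\to\Omega^{(0,1)}(\mathbb{CP}^1_q)\otimes_{\mathcal{B}}\mathcal{L}_n$, $\overline{\nabla}_{(n)}(\phi)=(\mu_2^{(n)})^{-1}\big((X_-\triangleright\phi)\omega_-\big)$. *)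

From HB Require Import structures.
From mathcomp Require Import all_boot all_order all_algebra.
Set Implicit Arguments. Unset Strict Implicit. Unset Printing Implicit Defensive.
Import Order.TTheory GRing.Theory Num.Theory.
Local Open Scope ring_scope.

(* Conventions.  The ground field is an arbitrary numeric algebraically      *)
(* closed field C (e.g. the complex numbers).  We fix r := q^{1/2}, the     *)
(* positive square root of q, with 0 < r < 1; thus q = r^2 and              *)
(* q^{n/2} = r^n for n : int.                                               *)

Definition qpar (C : numClosedFieldType) (r : C) : C := r ^+ 2.

Inductive in_subalg (C : numClosedFieldType) (A : algType C) (S : seq A)
  : A -> Prop :=
  | sa_gen x : x \in S -> in_subalg S x
  | sa_one : in_subalg S 1
  | sa_add x y : in_subalg S x -> in_subalg S y -> in_subalg S (x + y)
  | sa_scale (k : C) x : in_subalg S x -> in_subalg S (k *: x)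
  | sa_mul x y : in_subalg S x -> in_subalg S y -> in_subalg S (x * y).

(* A complex unital *-algebra generated by a, c subject to the relations of
   A(SU_q(2)), together with a left U_q(su(2))-module-algebra structure given
   by the linear operators K, K^{-1}, E, F (satisfying the Hopf algebra
   relations and the twisted Leibniz rules dictated by the coproduct and
   counit), with the prescribed values on the generators. *)
Record SUq2 (C : numClosedFieldType) (r : C) : Type := Build_SUq2 {
  alg : algType C;
  ga : alg;
  gc : alg;
  star : alg -> alg;
  star_add : forall x y, star (x + y) = star x + star y;
  star_scale : forall (k : C) x, star (k *: x) = Num.conj k *: star x;
  star_mul : forall x y, star (x * y) = star y * star x;
  star_invol : forall x, star (star x) = x;
  rel_ac : ga * gc = qpar r *: (gc * ga);
  rel_acs : ga * star gc = qpar r *: (star gc * ga);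
  rel_ccs : gc * star gc = star gc * gc;
  rel_unit1 : star ga * ga + star gc * gc = 1;
  rel_unit2 : ga * star ga + qpar r ^+ 2 *: (gc * star gc) = 1;
  generated : forall x, in_subalg [:: ga; gc; star ga; star gc] x;
  actK : alg -> alg;
  actKi : alg -> alg;
  actE : alg -> alg;
  actF : alg -> alg;
  actK_add : forall x y, actK (x + y) = actK x + actK y;
  actKi_add : forall x y, actKi (x + y) = actKi x + actKi y;
  actE_add : forall x y, actE (x + y) = actE x + actE y;
  actF_add : forall x y, actF (x + y) = actF x + actF y;
  actK_scale : forall (k : C) x, actK (k *: x) = k *: actK x;
  actKi_scale : forall (k : C) x, actKi (k *: x) = k *: actKi x;
  actE_scale : forall (k : C) x, actE (k *: x) = k *: actE x;
  actF_scale : forall (k : C) x, actF (k *: x) = k *: actF x;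
  hK_Ki : forall x, actK (actKi x) = x;
  hKi_K : forall x, actKi (actK x) = x;
  hKE : forall x, actK (actE x) = qpar r *: actE (actK x);
  hKF : forall x, actK (actF x) = (qpar r)^-1 *: actF (actK x);
  hEF : forall x, actE (actF x) - actF (actE x)
          = (qpar r - (qpar r)^-1)^-1 *: (actK (actK x) - actKi (actKi x));
  (* module algebra: h > (xy) = (h_(1) > x)(h_(2) > y), h > 1 = eps(h) 1 *)
  maK : forall x y, actK (x * y) = actK x * actK y;
  maKi : forall x y, actKi (x * y) = actKi x * actKi y;
  maE : forall x y, actE (x * y) = actE x * actK y + actKi x * actE y;
  maF : forall x y, actF (x * y) = actF x * actK y + actKi x * actF y;
  maK1 : actK 1 = 1;
  maKi1 : actKi 1 = 1;
  maE1 : actE 1 = 0;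
  maF1 : actF 1 = 0;
  vKa : actK ga = r^-1 *: ga;
  vKc : actK gc = r^-1 *: gc;
  vKas : actK (star ga) = r *: star ga;
  vKcs : actK (star gc) = r *: star gc;
  vEa : actE ga = - qpar r *: star gc;
  vEc : actE gc = star ga;
  vEas : actE (star ga) = 0;
  vEcs : actE (star gc) = 0;
  vFa : actF ga = 0;
  vFc : actF gc = 0;
  vFas : actF (star ga) = gc;
  vFcs : actF (star gc) = - (qpar r)^-1 *: ga
}.

Section Pieces.
Variables (C : numClosedFieldType) (r : C) (M : SUq2 r).
Local Notation A := (alg M).

Definition Lmod (n : int) (x : A) : Prop := @actK _ _ M x = r ^ n *: x.

Definition Xminus (x : A) : A := r^-1 *: @actF _ _ M (@actK _ _ M x).

(* Omega^1(SU_q(2)): free left A-module on omega_+, omega_-, omega_z;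
   an element  u w_+ + v w_- + t w_z  is the triple (u, v, t). *)
Definition Omega1 := (A * A * A)%type.
Definition om_add (w w' : Omega1) : Omega1 :=
  (w.1.1 + w'.1.1, w.1.2 + w'.1.2, w.2 + w'.2).
Definition om_lmul (x : A) (w : Omega1) : Omega1 :=
  (x * w.1.1, x * w.1.2, x * w.2).
Definition omega_minus : Omega1 := (0, 1, 0).
(* right multiplication by x in L_k :  w_+- x = q^k x w_+-,  w_z x = q^{2k} x w_z *)
Definition om_rmul (w : Omega1) (k : int) (x : A) : Omega1 :=
  (r ^ (2 * k) *: (w.1.1 * x), r ^ (2 * k) *: (w.1.2 * x),
   r ^ (4 * k) *: (w.2 * x)).

(* mu_2^{(n)}( nabla_(n) phi ) = (X_- > phi) omega_-  in  L_{n-2} omega_- *)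
Definition mu2_delbar (phi : A) : Omega1 := om_lmul (Xminus phi) omega_minus.

(* Image, under the multiplication isomorphism
     Omega^(0,1) (x)_B L_{n1} (x)_B L_{n2}  ~>  L_{n1+n2-2} omega_-,
   of  (nabla_(n1) (x) 1 + (Phi_(n1) (x) 1)(1 (x) nabla_(n2)))(phi (x) psi)
   for phi in L_{n1}, psi in L_{n2}:
     first term  :  mu2(nabla phi) . psi
     second term :  phi . mu2(nabla psi)   (since mu2 o Phi = mu1). *)
Definition tensor_delbar_mult (phi : A) (n2 : int) (psi : A) : Omega1 :=
  om_add (om_rmul (mu2_delbar phi) n2 psi) (om_lmul phi (mu2_delbar psi)).

End Pieces.

Arguments Lmod {C r} M n x.
Arguments Xminus {C r} M x.
Arguments mu2_delbar {C r} M phi.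
Arguments tensor_delbar_mult {C r} M phi n2 psi.

(* X_- = q^{-1/2} F K is a twisted derivation: from Delta F = F (x) K + K^-1 (x) F
   one gets X_-(phi psi) = (X_- phi)(K^2 > psi) + phi (X_- psi).  On L_{n2} the
   operator K^2 acts by q^{n2}, which is exactly the factor picked up when
   omega_- is moved past psi; so both sides of the identity agree. *)
From HB Require Import structures.
From mathcomp Require Import all_boot all_order all_algebra.
Import Order.TTheory GRing.Theory Num.Theory.
Local Open Scope ring_scope.

Section Holomorphic.
Variables (C : numClosedFieldType) (r : C) (M : SUq2 r).
Local Notation A := (alg M).
Hypothesis r_neq0 : r != 0.

Lemma Lmod_mul (n1 n2 : int) (x y : A) :
  Lmod M n1 x -> Lmod M n2 y -> Lmod M (n1 + n2) (x * y).
Proof.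
by move=> Kx Ky; rewrite /Lmod maK Kx Ky -scalerAl -scalerAr scalerA expfzDr.
Qed.

Lemma Lmod_actK2 (n : int) (y : A) :
  Lmod M n y -> actK (actK y) = r ^ (2 * n) *: y.
Proof.
move=> Ky; rewrite Ky actK_scale Ky scalerA -expfzDr //.
by rewrite -[2]/(1 + 1) mulrDl mul1r.
Qed.

Lemma Xminus_mul (x y : A) :
  Xminus M (x * y) = Xminus M x * actK (actK y) + x * Xminus M y.
Proof.
rewrite /Xminus maK maF hKi_K scalerDr -scalerAl; congr (_ + _).
by rewrite scalerAr.
Qed.

Lemma Xminus_mul_Lmod (n : int) (x y : A) : Lmod M n y ->
  Xminus M (x * y) = r ^ (2 * n) *: (Xminus M x * y) + x * Xminus M y.
Proof. by move=> Ky; rewrite Xminus_mul (@Lmod_actK2 n y Ky) scalerAr. Qed.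

End Holomorphic.

Theorem proposition3p8 (C : numClosedFieldType) (r : C)
  (hr0 : 0 < r) (hr1 : r < 1) (M : SUq2 r) (n1 n2 : int) (phi psi : alg M) :
  Lmod M n1 phi -> Lmod M n2 psi ->
  Lmod M (n1 + n2) (phi * psi) /\
  tensor_delbar_mult M phi n2 psi = mu2_delbar M (phi * psi).
Proof.
move=> Kphi Kpsi; have r_neq0 : r != 0 by rewrite gt_eqF.
split; first exact: Lmod_mul.
rewrite /tensor_delbar_mult /mu2_delbar /om_add /om_rmul /om_lmul /omega_minus /=.
rewrite !mulr0 !mul0r !scaler0 !addr0 !mulr1.
by rewrite (@Xminus_mul_Lmod _ _ M r_neq0 n2 phi psi Kpsi).
Qed.
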